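(* Let $\Phi:\mathbf D\to\mathbf C$, $\Psi:\mathbf C\to\mathbf D$ be a deformation retract of finite-type based chain complexes $(\mathbf C,I)$, $(\mathbf D,I')$ of real inner product spaces, and fix $n$. Then the conditions (1) $\mathrm{Proj}_{\operatorname{Ker}\partial_{n+1}^\dagger}(\Phi\Psi s-s)=0$ for all $s\in\mathbf C_n$, and (2) $\mathrm{Proj}_{\operatorname{Ker}\partial_{n-1}}(\Psi^\dagger\Phi^\dagger s-s)=0$ for all $s\in\mathbf C_{n-1}$ hold if and only if the Morsification $\mathcal M$ associated to $(\Phi,\Psi)$ is $(n,n-1)$-free.
   Context: $\partial$ is the boundary of $\mathbf C$, $\dagger$ the adjoint with respect to the inner products, $\mathrm{Proj}_W$ orthogonal projection. Deformation retract: chain maps with $\Psi\Phi=\mathrm{id}_{\mathbf D}$ and $\Phi\Psi$ chain homotopic to $\mathrm{id}_{\mathbf C}$. Then $\mathbf C=\operatorname{Ker}\Psi\oplus\operatorname{Im}\Phi$ as chain complexes. Morsification: give the subcomplex $\operatorname{Ker}\Psi$ (boundary $\partial'$) the restricted inner product and choose in each degree, via singular value decompositions, orthonormal bases $\mathcal R_+(\partial'_m)$ of $\operatorname{Im}\partial_m'^\dagger$ and $\mathcal L_+(\partial'_m)$ of $\operatorname{Im}\partial'_m$ with a bijection $v\mapsto w$, $\partial'_mv=\sigma w$, $\sigma>0$, plus a basis of the kernel of its Laplacian; base $\mathbf C$ by these one-dimensional spans together with summands of $\operatorname{Im}\Phi$; the Morse matching $\mathcal M$ consists of the edges $v\to w$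 (pairing $v\in\mathbf C_m$ with $w\in\mathbf C_{m-1}$), and cells of $\operatorname{Im}\Phi$ are critical. $\mathcal M$ is $(n,n-1)$-free if it pairs no $n$-cell with an $(n-1)$-cell, i.e. $\mathcal R_+(\partial'_n)=\emptyset$. *)

From HB Require Import structures.
From mathcomp Require Import all_boot all_order all_algebra.
Set Implicit Arguments. Unset Strict Implicit. Unset Printing Implicit Defensive.
Import Order.TTheory GRing.Theory Num.Theory.
Local Open Scope ring_scope.

(* A finite-type based chain complex of real inner product
   spaces is given by dimensions [c : int -> nat] (C_i = 'rV_(c i), written in
   coordinates w.r.t. the orthonormal basis I, so the inner product is the
   standard dot product <x,y> = x *m y^T) and a family of matrices
   [bd i j : 'M_(c i, c j)] of which only [bd i (i-1)] is used: it is the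
   boundary ∂_i : C_i -> C_{i-1}, acting on row vectors x |-> x *m bd i (i-1).
   Adjoints w.r.t. the dot product are transposes. *)

Section Defs.
Variable R : realFieldType.

Definition is_complex (c : int -> nat) (bd : forall i j : int, 'M[R]_(c i, c j)) :=
  forall i : int, bd i (i - 1) *m bd (i - 1) (i - 1 - 1) = 0.

Definition finite_type (c : int -> nat) :=
  exists N : nat, forall i : int, (N < absz i)%N -> c i = 0%N.

Definition chain_map (a b : int -> nat)
  (bdA : forall i j : int, 'M[R]_(a i, a j)) (bdB : forall i j : int, 'M[R]_(b i, b j))
  (f : forall i : int, 'M[R]_(a i, b i)) :=
  forall i : int, f i *m bdB i (i - 1) = bdA i (i - 1) *m f (i - 1).

Definition chain_homotopic (c : int -> nat) (bd : forall i j : int, 'M[R]_(c i, c j))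
  (f g : forall i : int, 'M[R]_(c i, c i)) :=
  exists h : forall i j : int, 'M[R]_(c i, c j),
    forall i : int, f i - g i = bd i (i - 1) *m h (i - 1) i + h i (i + 1) *m bd (i + 1) i.

Definition deformation_retract (c e : int -> nat)
  (bdC : forall i j : int, 'M[R]_(c i, c j)) (bdD : forall i j : int, 'M[R]_(e i, e j))
  (Phi : forall i : int, 'M[R]_(e i, c i)) (Psi : forall i : int, 'M[R]_(c i, e i)) :=
  [/\ chain_map bdD bdC Phi, chain_map bdC bdD Psi,
      forall i : int, Phi i *m Psi i = 1%:M
    & chain_homotopic bdC (fun i => Psi i *m Phi i) (fun i => 1%:M)].

Definition projmx (m n : nat) (U : 'M[R]_(m, n)) : 'M[R]_n :=
  let B := row_base U in (B^T *m invmx (B *m B^T) *m B).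

Definition orthproj (m n : nat) (U : 'M[R]_(m, n)) (v : 'rV[R]_n) : 'rV[R]_n :=
  v *m projmx U.

(* Ker Psi_i is the row space of kermx (Psi i); the restricted
   boundary ∂'_n : Ker Psi_n -> Ker Psi_{n-1} has adjoint (w.r.t. the restricted
   inner product) y |-> Proj_{Ker Psi_n} (∂_n^† y).  R_+(∂'_n) is an orthonormal
   basis of Im ∂'_n^†, so its cardinality is the dimension of that image. *)
Definition card_Rplus (c e : int -> nat) (bdC : forall i j : int, 'M[R]_(c i, c j))
  (Psi : forall i : int, 'M[R]_(c i, e i)) (n : int) : nat :=
  \rank (kermx (Psi (n - 1)) *m (bdC n (n - 1))^T *m projmx (kermx (Psi n))).

(* the Morse matching pairs no n-cell with an (n-1)-cell: R_+(∂'_n) = ∅ *)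
Definition morse_free (c e : int -> nat) (bdC : forall i j : int, 'M[R]_(c i, c j))
  (Psi : forall i : int, 'M[R]_(c i, e i)) (n : int) : Prop :=
  card_Rplus bdC Psi n = 0%N.

End Defs.

(* Write P = Psi Phi: an idempotent chain map with Ker Psi = Im (P - 1) and
   P - 1 = d h + h d.  Condition (1) says that Ker Psi_n consists of boundaries
   (the orthogonal complement of Ker d_(n+1)^T is Im d_(n+1)), condition (2)
   that P fixes the cycles Z_(n-1), and (n, n-1)-freeness that d_n vanishes on
   Ker Psi_n (the restricted boundary d'_n and its adjoint vanish together).
   Since d_n maps Ker Psi_n into Z_(n-1) /\ Ker Psi_(n-1), where P is both the
   identity (by (2)) and zero, (2) forces freeness.  Conversely, the homotopy
   makes Ker Psi acyclic; if d_n kills Ker Psi_n, every element of Ker Psi_n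
   is a cycle, hence a boundary, which is (1); and a cycle a of Ker Psi_(n-1)
   is a boundary z d_n with z d_n = z P d_n = (z d_n) P = a P = 0, so that
   a = x - x P vanishes for every cycle x, which is (2). *)

From HB Require Import structures.
From mathcomp Require Import all_boot all_order all_algebra.
Set Implicit Arguments. Unset Strict Implicit. Unset Printing Implicit Defensive.
Import Order.TTheory GRing.Theory Num.Theory.
Local Open Scope ring_scope.

Section OrthogonalProjection.
Variable R : realFieldType.

Lemma mulmx_tr_eq0 m n (y : 'M[R]_(m, n)) : (y *m y^T == 0) = (y == 0).
Proof.
apply/eqP/eqP => [yy0|->]; last by rewrite mul0mx.
apply/matrixP => i j; rewrite mxE.
have := congr1 (fun M : 'M[R]_m => M i i) yy0.
rewrite !mxE (eq_bigr (fun k => y i k ^+ 2)) => [yii0|k _]; last by rewrite mxE.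
by apply/eqP; rewrite -sqrf_eq0 (psumr_eq0P (fun k _ => sqr_ge0 (y i k)) yii0).
Qed.

Lemma gram_unitmx m n (B : 'M[R]_(m, n)) : row_free B -> B *m B^T \in unitmx.
Proof.
move=> freeB; rewrite -row_free_unit -kermx_eq0; apply/eqP/(row_free_inj freeB).
rewrite mul0mx; apply/eqP; rewrite -mulmx_tr_eq0.
by rewrite trmx_mul !mulmxA -(mulmxA _ B) mulmx_ker mul0mx.
Qed.

Lemma mulmx_trmx_submx0 k m n p
    (M : 'M[R]_(k, n)) (U : 'M[R]_(m, n)) (V : 'M[R]_(p, n)) :
  (V <= U)%MS -> M *m U^T = 0 -> M *m V^T = 0.
Proof. by move=> /submxP[D ->] MU0; rewrite trmx_mul mulmxA MU0 mul0mx. Qed.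

Lemma mulmx_projmx_eq0 k m n (M : 'M[R]_(k, n)) (U : 'M[R]_(m, n)) :
  (M *m projmx U == 0) = (M *m U^T == 0).
Proof.
rewrite /projmx; set B := row_base U.
have [UB BU] : (U <= B)%MS /\ (B <= U)%MS by rewrite !eq_row_base.
have Bu := gram_unitmx (row_base_free U).
apply/eqP/eqP => [MP0|MU0]; last by rewrite !mulmxA (mulmx_trmx_submx0 BU MU0) !mul0mx.
apply: (mulmx_trmx_submx0 UB); rewrite -(mulmxKV Bu (M *m B^T)).
suff -> : M *m B^T *m invmx (B *m B^T) = 0 by rewrite mul0mx.
by apply/(row_free_inj (row_base_free U)); rewrite mul0mx -MP0 !mulmxA.
Qed.

Lemma mulmx_ker_trmx_projmx k p q (A : 'M[R]_(p, q)) (y : 'M[R]_(k, p)) :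
  y *m A *m projmx (kermx A^T) = 0.
Proof.
apply/eqP; rewrite mulmx_projmx_eq0 -mulmxA -{1}[A]trmxK -trmx_mul mulmx_ker.
by rewrite trmx0 mulmx0.
Qed.

Lemma orthproj_adjoint_fixP m n p
    (U : 'M[R]_(m, n)) (A : 'M[R]_(n, p)) (B : 'M[R]_(p, n)) :
  (forall s : 'rV_n, orthproj U (s *m B^T *m A^T - s) = 0) <-> U *m A *m B = U.
Proof.
have orthE k (M : 'M[R]_(k, n)) :
    M *m (B^T *m A^T - 1%:M) *m U^T = M *m (U *m A *m B - U)^T.
  by rewrite -mulmxA mulmxBl mul1mx [(_ - _)^T]linearB /= !trmx_mul mulmxA.
split => [orth|UAB s]; last first.
  apply/eqP; rewrite /orthproj mulmx_projmx_eq0 -[s in _ - s]mulmx1 -mulmxA -mulmxBr.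
  by rewrite orthE UAB subrr trmx0 mulmx0.
apply/eqP; rewrite -subr_eq0 -trmx_eq0 -[_^T]mul1mx -orthE -mulmx_projmx_eq0.
apply/eqP/row_matrixP => i; rewrite row0 !row_mul -(orth (row i 1%:M)).
by rewrite /orthproj mulmxBr mulmx1 (mulmxA _ B^T).
Qed.

Lemma restricted_adjoint_eq0 k l p q
    (K : 'M[R]_(k, p)) (A : 'M[R]_(p, q)) (L : 'M[R]_(l, q)) :
  (K *m A <= L)%MS -> (L *m A^T *m projmx K == 0) = (K *m A == 0).
Proof.
move=> /submxP[D KAE]; rewrite mulmx_projmx_eq0 -trmx_eq0 !trmx_mul !trmxK mulmxA.
apply/eqP/eqP => [KAL0|->]; last by rewrite mul0mx.
by apply/eqP; rewrite -mulmx_tr_eq0 {2}KAE trmx_mul mulmxA KAL0 mul0mx.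
Qed.

End OrthogonalProjection.

Section DeformationRetract.
Variables (R : realFieldType) (c e : int -> nat).
Variable bdC : forall i j : int, 'M[R]_(c i, c j).
Variable bdD : forall i j : int, 'M[R]_(e i, e j).
Variables (Phi : forall i : int, 'M[R]_(e i, c i)) (Psi : forall i : int, 'M[R]_(c i, e i)).
Variable h : forall i j : int, 'M[R]_(c i, c j).
Hypothesis cxC : is_complex bdC.
Hypotheses (cPhi : chain_map bdD bdC Phi) (cPsi : chain_map bdC bdD Psi).
Hypothesis PhiPsi : forall i, Phi i *m Psi i = 1%:M.
Hypothesis homot : forall i, Psi i *m Phi i - 1%:M
  = bdC i (i - 1) *m h (i - 1) i + h i (i + 1) *m bdC (i + 1) i.

Lemma retract_sub_kerPsi i m (x : 'M[R]_(m, c i)) : (x *m Psi i *m Phi i - x) *m Psi i = 0.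
Proof. by rewrite mulmxBl -!mulmxA PhiPsi mulmx1 subrr. Qed.

Lemma retract_bd i m (x : 'M[R]_(m, c i)) :
  x *m Psi i *m Phi i *m bdC i (i - 1) = x *m bdC i (i - 1) *m Psi (i - 1) *m Phi (i - 1).
Proof. by rewrite -!mulmxA cPhi (mulmxA (Psi i)) cPsi !mulmxA. Qed.

Lemma bd_kerPsi_sub i : (kermx (Psi i) *m bdC i (i - 1) <= kermx (Psi (i - 1)))%MS.
Proof. by apply/sub_kermxP; rewrite -mulmxA -cPsi mulmxA mulmx_ker mul0mx. Qed.

Lemma morse_freeE n : morse_free bdC Psi n <-> kermx (Psi n) *m bdC n (n - 1) = 0.
Proof.
rewrite /morse_free /card_Rplus; have KAsub := bd_kerPsi_sub n.
split => [/eqP|KA0]; first by rewrite mxrank_eq0 restricted_adjoint_eq0 // => /eqP.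
by apply/eqP; rewrite mxrank_eq0 restricted_adjoint_eq0 // KA0.
Qed.

Lemma kerPsi_cycle_boundary i m (x : 'M[R]_(m, c i)) :
  x *m Psi i = 0 -> x *m bdC i (i - 1) = 0 -> (x <= bdC (i + 1) i)%MS.
Proof.
move=> xPsi0 xbd0; have := congr1 (mulmx x) (homot i).
rewrite mulmxBr mulmx1 mulmxA xPsi0 mul0mx sub0r mulmxDr mulmxA xbd0 mul0mx add0r mulmxA.
by move=> xE; rewrite -[x]opprK xE eqmx_opp submxMl.
Qed.

Section Degree.
Variable n : int.
Local Notation cycles := (kermx (bdC (n - 1) (n - 1 - 1))).

Lemma fixed_cycles_kerPsi_bd_eq0 :
  cycles *m Psi (n - 1) *m Phi (n - 1) = cycles -> kermx (Psi n) *m bdC n (n - 1) = 0.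
Proof.
move=> fixZ; set X := kermx (Psi n) *m _.
have /submxP[D XE] : (X <= cycles)%MS by apply/sub_kermxP; rewrite -mulmxA cxC mulmx0.
have /sub_kermxP XPsi0 := bd_kerPsi_sub n.
by rewrite XE -fixZ (mulmxA D (cycles *m _)) (mulmxA D cycles) -XE XPsi0 mul0mx.
Qed.

Hypothesis kerPsi_bd0 : kermx (Psi n) *m bdC n (n - 1) = 0.

Lemma kerPsi_bd_eq0 m (x : 'M[R]_(m, c n)) : x *m Psi n = 0 -> x *m bdC n (n - 1) = 0.
Proof. by move=> /sub_kermxP/submxP[D ->]; rewrite -mulmxA kerPsi_bd0 mulmx0. Qed.

Lemma retract_fixes_boundaries m (x : 'M[R]_(m, c n)) :
  x *m bdC n (n - 1) *m Psi (n - 1) *m Phi (n - 1) = x *m bdC n (n - 1).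
Proof.
apply/eqP; rewrite -retract_bd -subr_eq0 -mulmxBl.
by rewrite kerPsi_bd_eq0 ?retract_sub_kerPsi.
Qed.

Lemma kerPsi_cycle_eq0 m (x : 'M[R]_(m, c (n - 1))) :
  x *m Psi (n - 1) = 0 -> x *m bdC (n - 1) (n - 1 - 1) = 0 -> x = 0.
Proof.
move=> xPsi0 xbd0; have := kerPsi_cycle_boundary xPsi0 xbd0.
rewrite subrK => /submxP[D xE].
by rewrite xE -retract_fixes_boundaries -xE xPsi0 mul0mx.
Qed.

Lemma retract_fixes_cycles : cycles *m Psi (n - 1) *m Phi (n - 1) = cycles.
Proof.
apply/eqP; rewrite -subr_eq0; apply/eqP/kerPsi_cycle_eq0; first exact: retract_sub_kerPsi.
by rewrite mulmxBl retract_bd !mulmx_ker !mul0mx subrr.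
Qed.

End Degree.

End DeformationRetract.

Theorem mainTheorem10 (R : realFieldType) (c e : int -> nat)
  (bdC : forall i j : int, 'M[R]_(c i, c j)) (bdD : forall i j : int, 'M[R]_(e i, e j))
  (Phi : forall i : int, 'M[R]_(e i, c i)) (Psi : forall i : int, 'M[R]_(c i, e i))
  (n : int) :
  is_complex bdC -> is_complex bdD -> finite_type c -> finite_type e ->
  deformation_retract bdC bdD Phi Psi ->
  ((forall s : 'rV[R]_(c n),
       orthproj (kermx (bdC (n + 1) n)^T) (s *m Psi n *m Phi n - s) = 0) /\
   (forall s : 'rV[R]_(c (n - 1)),
       orthproj (kermx (bdC (n - 1) (n - 1 - 1)))
                (s *m (Phi (n - 1))^T *m (Psi (n - 1))^T - s) = 0))
  <-> morse_free bdC Psi n.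
Proof.
move=> cxC _ _ _ [cPhi cPsi PhiPsi [h homot]].
split => [[_ /orthproj_adjoint_fixP fixK] | /(morse_freeE cPsi) kerPsi_bd0].
  by apply/(morse_freeE cPsi); exact: fixed_cycles_kerPsi_bd_eq0 fixK.
split => [s|].
  have /submxP[D ->] : (s *m Psi n *m Phi n - s <= bdC (n + 1)%R n)%MS.
    apply: (kerPsi_cycle_boundary homot); first exact: retract_sub_kerPsi.
    by rewrite (kerPsi_bd_eq0 kerPsi_bd0) ?retract_sub_kerPsi.
  exact: mulmx_ker_trmx_projmx.
exact/orthproj_adjoint_fixP/(retract_fixes_cycles cPhi cPsi PhiPsi homot).
Qed.
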